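(* Let $q$ be a prime power, $r$ a prime with $r\mid(q-1)$ and $r\ge3$, and $q/2\le\ell\le q-1$. The quantum Tamo–Barg code $\mathrm{CSS}(C,C)$ with parameters $q,r,\ell$ has distance at least \[ d=(q-1)\left(1-\frac{1}{2r}-\sqrt{\frac{1}{4r^2}+\frac{r-1}{r}\cdot\frac{\ell-1}{q-1}}\right). \]
   Context: $[n]=\{0,\dots,n-1\}$, $\mathbb{F}_q^*=\mathbb{F}_q\setminus\{0\}$. For $S\subseteq\mathbb{Z}_{\ge0}$, $\mathbb{F}_q[X]^S=\{\sum_{i\in S}a_iX^i\}$, $\mathrm{ev}(f)=(f(x))_{x\in\mathbb{F}_q^*}$. Let $S=\{i\in[\ell]:i\not\equiv r-1\pmod r\}\cup\{i\in[q-1]:i\equiv1\pmod r\}$, $C=\mathrm{ev}(\mathbb{F}_q[X]^S)\subseteq\mathbb{F}_q^{q-1}$; for $\ell\ge q/2$, $C^\perp\subseteq C$ and the quantum Tamo–Barg code is the CSS code $\mathrm{CSS}(C,C)=\mathrm{span}\{\sum_{y\in C^\perp}|x+y\rangle:x\in C\}$. Its distance is $\min\{|c|:c\in C\setminus C^\perp\}$, $|c|$ the Hamming weight. *)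

From HB Require Import structures.
From mathcomp Require Import all_boot all_order all_algebra all_field.
Set Implicit Arguments. Unset Strict Implicit. Unset Printing Implicit Defensive.
Import Order.TTheory GRing.Theory Num.Theory.
Local Open Scope ring_scope.

Definition word (F : finFieldType) := {ffun {unit F} -> F}.

Definition ev (F : finFieldType) (f : {poly F}) : word F :=
  [ffun u : {unit F} => f.[val u]].

Definition TB_S (q r l : nat) (i : nat) : bool :=
  ((i < l)%N && (i %% r != (r - 1) %% r)%N) || ((i < q - 1)%N && (i %% r == 1 %% r)%N).

Definition inTB (F : finFieldType) (r l : nat) (c : word F) : Prop :=
  exists f : {poly F}, (forall i, f`_i != 0 -> TB_S #|F| r l i) /\ c = ev f.

Definition inTB_dual (F : finFieldType) (r l : nat) (y : word F) : Prop :=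
  forall x : word F, inTB r l x -> \sum_(u : {unit F}) x u * y u = 0.

Definition wt (F : finFieldType) (c : word F) : nat := #|[set u | c u != 0]|.

From mathcomp Require Import all_boot all_order all_algebra all_field.
From mathcomp Require Import all_fingroup all_solvable zify ring lra.
Set Implicit Arguments. Unset Strict Implicit. Unset Printing Implicit Defensive.
Import Order.TTheory GRing.Theory Num.Theory.

(* Write q = #|F| and let f be supported on S with ev f outside C^perp.  The
   part of C with exponents = 1 (mod r) lies in C^perp, because for such j and
   i in S the sum i + j is never divisible by r, so the character sums over
   F^* in <ev X^i, ev X^j> vanish; hence f has a coefficient f_i0 with
   i0 <> 1 (mod r).  Let mu < F^* have order r and Z be the zero set of f in
   F^*.  For 1 <> w in mu, the polynomial w f(X) - f(wX) has degree < l (the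
   coefficients with i = 1 (mod r) cancel), is nonzero (coefficient i0) and
   vanishes on Z :&: w^-1 Z, so |Z :&: w^-1 Z| <= l - 1.  Cauchy-Schwarz applied
   to u |-> |Z :&: mu u| then yields r |Z|^2 <= (q - 1) (|Z| + (r - 1)(l - 1)), and
   solving this quadratic inequality for |Z| = q - 1 - wt (ev f) gives the
   bound. *)

Lemma sqr_sum_le_card_sum_sqr (I : finType) (a : I -> nat) :
  (\sum_i a i) ^ 2 <= #|I| * \sum_i a i ^ 2.
Proof.
rewrite -(leq_pmul2l (isT : 0 < 2)).
have -> : (\sum_i a i) ^ 2 = \sum_i \sum_j a i * a j.
  by rewrite expnS expn1 big_distrl; apply: eq_bigr => i _; rewrite big_distrr.
have -> : 2 * (#|I| * \sum_i a i ^ 2) = \sum_i \sum_j (a i ^ 2 + a j ^ 2).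
  under [RHS]eq_bigr do rewrite big_split /= sum_nat_const.
  by rewrite big_split /= sum_nat_const -big_distrr mul2n -addnn.
rewrite big_distrr; apply: leq_sum => i _; rewrite big_distrr.
by apply: leq_sum => j _; apply: nat_Cauchy.
Qed.

Section Overlaps.
Variables (gT : finGroupType) (H : {group gT}) (Z : {set gT}).

Let hits (u : gT) : nat := \sum_(w in H) ((w * u)%g \in Z : nat).

Let sum_indicator (u : gT) : \sum_(v : gT) ((u * v)%g \in Z : nat) = #|Z|.
Proof. by rewrite -sum1_card [RHS]big_mkcond [RHS](reindex_inj (mulgI u)). Qed.

Let sum_hits : \sum_u hits u = #|H| * #|Z|.
Proof.
by rewrite exchange_big /= (eq_bigr (fun=> #|Z|)) ?sum_nat_const // => w _;
  apply: sum_indicator.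
Qed.

Let hits_mull (w u : gT) : w \in H -> hits (w * u) = hits u.
Proof.
move=> Hw; rewrite [RHS](reindex_inj (mulIg w)) /=.
by apply: eq_big => v; [rewrite groupMr | rewrite mulgA].
Qed.

Let sum_hits_sqr : \sum_u hits u ^ 2 = #|H| * \sum_(u in Z) hits u.
Proof.
transitivity (\sum_(w in H) \sum_u ((w * u)%g \in Z) * hits (w * u)).
  rewrite exchange_big /=; apply: eq_bigr => u _.
  rewrite expnS expn1 big_distrl.
  by apply: eq_bigr => w Hw; rewrite hits_mull.
rewrite (eq_bigr (fun=> \sum_(u in Z) hits u)) ?sum_nat_const // => w _.
rewrite [RHS]big_mkcond [RHS](reindex_inj (mulgI w)) /=.
by apply: eq_bigr => u _; case: (_ \in Z); rewrite ?mul1n.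
Qed.

Let sum_hits_in : \sum_(u in Z) hits u = \sum_(w in H) #|[set u in Z | (w * u)%g \in Z]|.
Proof.
rewrite exchange_big /=; apply: eq_bigr => w _.
by rewrite -sum1dep_card big_mkcondr.
Qed.

Lemma card_sqr_le_overlaps (m : nat) :
  (forall w, w \in H -> w != 1%g -> #|[set u in Z | (w * u)%g \in Z]| <= m) ->
  #|H| * #|Z| ^ 2 <= #|gT| * (#|Z| + #|H|.-1 * m).
Proof.
move=> overlap_le.
have in_le : \sum_(u in Z) hits u <= #|Z| + #|H|.-1 * m.
  rewrite sum_hits_in (bigD1 1%g) ?group1 //= leq_add //.
    by apply: subset_leq_card; apply/subsetP => u; rewrite !inE mul1g => /andP[].
  rewrite (cardsD1 1%g H) group1 -sum_nat_const.
  rewrite (eq_bigl [in H :\ 1%g]); last by move=> w; rewrite !inE andbC.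
  by apply: leq_sum => w /setD1P[w1 Hw]; apply: overlap_le.
have := sqr_sum_le_card_sum_sqr hits.
rewrite sum_hits sum_hits_sqr expnMn mulnCA expnS expn1 -mulnA.
rewrite leq_pmul2l ?cardG_gt0 // => /leq_trans; apply.
by rewrite leq_mul2l in_le orbT.
Qed.

End Overlaps.

Local Open Scope ring_scope.

Lemma sum_units_expr_eq0 (F : finFieldType) (x : {unit F}) (k : nat) :
  val x ^+ k != 1 -> \sum_(u : {unit F}) val u ^+ k = 0.
Proof.
move=> xk_neq1; set S := \sum_(u : {unit F}) _.
have S_fixed : val x ^+ k * S = S.
  rewrite mulr_sumr [RHS](reindex_inj (mulgI x)) /=.
  by apply: eq_bigr => u _; rewrite exprMn.
apply/eqP; move/eqP: S_fixed; rewrite -subr_eq0 -{2}[S]mul1r -mulrBl mulf_eq0.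
by rewrite subr_eq0 (negPf xk_neq1).
Qed.

Lemma sum_ev_mul_eq0 (F : finFieldType) (x : {unit F}) (f g : {poly F}) :
  (forall i j, f`_i != 0 -> g`_j != 0 -> val x ^+ (i + j) != 1) ->
  \sum_(u : {unit F}) ev f u * ev g u = 0.
Proof.
move=> fg_orth.
under eq_bigr => u _ do rewrite !ffunE !horner_coef mulr_suml; rewrite exchange_big.
apply: big1 => i _; under eq_bigr => u _ do rewrite mulr_sumr; rewrite exchange_big.
apply: big1 => j _.
under eq_bigr => u _ do rewrite mulrACA -exprD; rewrite -mulr_sumr.
have [->|fi_neq0] := eqVneq f`_i 0; first by rewrite mul0r mul0r.
have [->|gj_neq0] := eqVneq g`_j 0; first by rewrite mulr0 mul0r.
by rewrite (sum_units_expr_eq0 (fg_orth _ _ fi_neq0 gj_neq0)) mulr0.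
Qed.

Definition dilation_defect (R : comNzRingType) (z : R) (p : {poly R}) : {poly R} :=
  \poly_(i < size p) (p`_i * (z - z ^+ i)).

Lemma coef_dilation_defect (R : comNzRingType) (z : R) (p : {poly R}) (i : nat) :
  (dilation_defect z p)`_i = p`_i * (z - z ^+ i).
Proof.
rewrite coef_poly; case: ltnP => // /(nth_default 0) ->.
by rewrite mul0r.
Qed.

Lemma horner_dilation_defect (R : comNzRingType) (z : R) (p : {poly R}) (u : R) :
  (dilation_defect z p).[u] = z * p.[u] - p.[z * u].
Proof.
rewrite horner_poly !horner_coef mulr_sumr -sumrB.
by apply: eq_bigr => i _; rewrite exprMn; ring.
Qed.

Lemma card_roots_inj_lt (R : idomainType) (T : finType) (phi : T -> R) (p : {poly R}) :
  injective phi -> p != 0 -> (#|[set t | root p (phi t)]| < size p)%N.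
Proof.
move=> phi_inj p_neq0; rewrite cardE -(size_map phi).
apply: max_poly_roots => //; last by rewrite map_inj_uniq ?enum_uniq.
by apply/allP => y /mapP[t]; rewrite mem_enum inE => p_root ->.
Qed.

Lemma TB_S_add_ndvd (q r l i j : nat) :
  (2 < r)%N -> TB_S q r l i -> (j %% r == 1)%N -> ~~ (r %| i + j)%N.
Proof.
move=> r_gt2; rewrite /TB_S (@modn_small (r - 1)) ?(@modn_small 1); try lia.
have := ltn_mod i r; rewrite /dvdn -modnDm.
by move=> i_lt /orP[/andP[_ /eqP i_neq] | /andP[_ /eqP ->]] /eqP ->; rewrite modn_small; lia.
Qed.

Lemma ev_inTB_dual (F : finFieldType) (r l : nat) (x : {unit F}) (f : {poly F}) :
  (2 < r)%N -> #[x]%g = r -> (forall j, f`_j != 0 -> (j %% r == 1)%N) ->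
  inTB_dual r l (ev f).
Proof.
move=> r_gt2 ox f_supp _ [g [g_supp ->]].
apply: (sum_ev_mul_eq0 (x := x)) => i j gi fj.
rewrite -FinRing.val_unitX -FinRing.val_unit1 (inj_eq val_inj) -order_dvdn ox.
exact: TB_S_add_ndvd (g_supp _ gi) (f_supp _ fj).
Qed.

Lemma nondual_coef_mod_neq1 (F : finFieldType) (r l : nat) (x : {unit F}) (f : {poly F}) :
  (2 < r)%N -> #[x]%g = r -> ~ inTB_dual r l (ev f) ->
  exists2 i, f`_i != 0 & (i %% r != 1)%N.
Proof.
move=> r_gt2 ox nondual.
case: (pickP (fun i : 'I_(size f) => (f`_i != 0) && (i %% r != 1)%N)).
  by move=> i /andP[fi ir]; exists i.
move=> no_coef; case: nondual; apply: (ev_inTB_dual r_gt2 ox) => j fj.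
have j_lt : (j < size f)%N by apply: contraNT fj; rewrite -leqNgt => /(nth_default 0) ->.
by move: (no_coef (Ordinal j_lt)); rewrite /= fj /= => /negbFE.
Qed.

Definition unit_zeros (F : finFieldType) (f : {poly F}) : {set {unit F}} :=
  [set u | root f (val u)].

Lemma wt_ev (F : finFieldType) (f : {poly F}) :
  wt (ev f) = (#|F|.-1 - #|unit_zeros f|)%N.
Proof.
rewrite -card_finField_unit cardsT -(cardsC (unit_zeros f)) addKn.
by apply: eq_card => u; rewrite !inE ffunE.
Qed.

Section CommonZeros.
Variables (F : finFieldType) (r : nat).
Hypothesis r_prime : prime r.

Lemma unit_expr_eq_self (w : {unit F}) (i : nat) :
  #[w]%g = r -> (val w ^+ i == val w) = (i %% r == 1)%N.
Proof.
move=> ow; rewrite -[X in _ == X]expr1 -!FinRing.val_unitX (inj_eq val_inj).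
by rewrite eq_expg_mod_order ow (modn_small (prime_gt1 r_prime)).
Qed.

Lemma card_common_zeros_le (l : nat) (f : {poly F}) (w : {unit F}) (i0 : nat) :
  #[w]%g = r -> (forall i, f`_i != 0 -> (i < l)%N || (i %% r == 1)%N) ->
  f`_i0 != 0 -> (i0 %% r != 1)%N ->
  (#|[set u in unit_zeros f | (w * u)%g \in unit_zeros f]| <= l.-1)%N.
Proof.
move=> ow f_supp fi0 i0r; set g := dilation_defect (val w) f.
have g_neq0 : g != 0.
  apply: contra_neq fi0 => g0; have := coef_dilation_defect (val w) f i0.
  rewrite -/g g0 coef0 => /esym/eqP; rewrite mulf_eq0 subr_eq0 [val w == _]eq_sym.
  by rewrite unit_expr_eq_self // (negPf i0r) orbF => /eqP.
have size_g : (size g <= l)%N.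
  apply/leq_sizeP => i li; rewrite coef_dilation_defect.
  have [->|fi] := eqVneq f`_i 0; first by rewrite mul0r.
  move: (f_supp i fi); rewrite ltnNge li /= -(unit_expr_eq_self _ ow) => /eqP ->.
  by rewrite subrr mulr0.
have common_roots : [set u in unit_zeros f | (w * u)%g \in unit_zeros f]
    \subset [set u | root g (val u)].
  apply/subsetP => u; rewrite !inE /root horner_dilation_defect => /andP[/eqP fu /eqP fwu].
  by rewrite fu fwu mulr0 subrr.
apply: leq_trans (subset_leq_card common_roots) _.
have lt_l := leq_trans (card_roots_inj_lt (T := {unit F}) val_inj g_neq0) size_g.
by rewrite -ltnS prednK ?(leq_ltn_trans (leq0n _) lt_l).
Qed.

Lemma card_unit_zeros_sqr_le (l : nat) (f : {poly F}) (x : {unit F}) (i0 : nat) :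
  #[x]%g = r -> (forall i, f`_i != 0 -> (i < l)%N || (i %% r == 1)%N) ->
  f`_i0 != 0 -> (i0 %% r != 1)%N ->
  (r * #|unit_zeros f| ^ 2 <= #|F|.-1 * (#|unit_zeros f| + r.-1 * l.-1))%N.
Proof.
move=> ox f_supp fi0 i0r; have card_x : #|<[x]>%g| = r by rewrite -orderE.
rewrite -card_x -card_finField_unit cardsT.
apply: card_sqr_le_overlaps => w wx w_neq1.
have ow : #[w]%g = r by apply: nt_prime_order; rewrite // -card_x expg_cardG.
exact: card_common_zeros_le ow f_supp fi0 i0r.
Qed.

End CommonZeros.

Lemma ler_quadratic_root (R : rcfType) (a b c e : R) :
  0 < a -> a * c ^+ 2 <= b * c + e ->
  c <= b / (2 * a) + Num.sqrt ((b / (2 * a)) ^+ 2 + e / a).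
Proof.
move=> a_gt0 quad; set m := b / (2 * a); rewrite -lerBlDl.
have [cm_le0|cm_gt0] := lerP (c - m) 0; first exact: le_trans cm_le0 (sqrtr_ge0 _).
have sqr_le : (c - m) ^+ 2 <= m ^+ 2 + e / a.
  rewrite -subr_ge0.
  have -> : m ^+ 2 + e / a - (c - m) ^+ 2 = (b * c + e - a * c ^+ 2) / a.
    by rewrite /m; field; rewrite lt0r_neq0.
  by apply: divr_ge0; [rewrite subr_ge0 | exact: ltW].
rewrite -(ger0_norm (ltW cm_gt0)) -sqrtr_sqr ler_sqrt //.
exact: le_trans (sqr_ge0 _) sqr_le.
Qed.

Lemma TB_distance_of_zeros (R : rcfType) (n N r L : nat) :
  (0 < r)%N -> (0 < n)%N -> (N <= n)%N -> (r * N ^ 2 <= n * (N + (r - 1) * L))%N ->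
  n%:R * (1 - 1 / (2 * r)%:R
      - Num.sqrt (1 / (4 * r ^ 2)%:R + (r - 1)%:R / r%:R * (L%:R / n%:R)))
    <= (n - N)%:R :> R.
Proof.
move=> r_gt0 n_gt0 N_le quad.
have r_pos : 0 < r%:R :> R by rewrite ltr0n.
have n_pos : 0 < n%:R :> R by rewrite ltr0n.
set s := Num.sqrt _.
have root_eq : Num.sqrt ((n%:R / (2 * r%:R)) ^+ 2 + n%:R * ((r - 1) * L)%:R / r%:R) = n%:R * s :> R.
  rewrite -[n%:R in RHS](ger0_norm (ltW n_pos)) -sqrtr_sqr -sqrtrM ?sqr_ge0 //.
  congr Num.sqrt; rewrite !natrM !natrB //; field.
  by rewrite !lt0r_neq0.
have quadR : r%:R * N%:R ^+ 2 <= n%:R * N%:R + n%:R * ((r - 1) * L)%:R :> R.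
  by rewrite -!natrM -natrX -natrM -natrD ler_nat -mulnDr.
have := ler_quadratic_root r_pos quadR.
rewrite root_eq natrB // natrM => N_le_root; lra.
Qed.

Lemma TB_S_lt_or_mod1 (q r l i : nat) :
  (1 < r)%N -> TB_S q r l i -> (i < l)%N || (i %% r == 1)%N.
Proof.
move=> r_gt1; rewrite /TB_S (modn_small r_gt1).
by case/orP=> [/andP[-> _] | /andP[_ ->]]; rewrite ?orbT.
Qed.

Theorem theorem6p2 (R : rcfType) (F : finFieldType) (r l : nat) :
  prime r -> (r %| #|F| - 1)%N -> (3 <= r)%N ->
  (#|F| <= 2 * l)%N -> (l <= #|F| - 1)%N ->
  forall c : word F, inTB r l c -> ~ inTB_dual r l c ->
  (#|F| - 1)%:R * (1 - 1 / (2 * r)%:R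
      - Num.sqrt (1 / (4 * r ^ 2)%:R + (r - 1)%:R / r%:R * ((l - 1)%:R / (#|F| - 1)%:R)))
    <= (wt c)%:R :> R.
Proof.
(* q <= 2 l <= 2 (q - 1) only makes CSS(C, C) well defined; the bound does
   not depend on it. *)
move=> r_prime r_dvd r_ge3 _ _ c [f [f_supp ->]] nondual.
have r_dvd_units : (r %| #|[set: {unit F}]%G|)%N by rewrite card_finField_unit -subn1.
have [x _ ox] := Cauchy r_prime r_dvd_units.
have [i0 fi0 i0r] := nondual_coef_mod_neq1 r_ge3 ox nondual.
have f_supp_mod i : f`_i != 0 -> (i < l)%N || (i %% r == 1)%N.
  by move/f_supp; apply: TB_S_lt_or_mod1; apply: prime_gt1.
rewrite wt_ev -subn1; apply: TB_distance_of_zeros.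
- exact: prime_gt0.
- by rewrite subn_gt0 finNzRing_gt1.
- by rewrite subn1 -card_finField_unit subset_leq_card ?subsetT.
- rewrite !subn1; exact: (card_unit_zeros_sqr_le r_prime ox f_supp_mod fi0 i0r).
Qed.
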